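(* Let $D=\{(x,y)\in\mathbb R^2:x^2+y^2\le1\}$ with the Euclidean metric. There is a sequence of $C^1$ diffeomorphisms $f_n\colon D\to D$ that does not converge to $\mathrm{id}_D$ in the $C^1$ topology but satisfies $\mathrm{d}_W(f_n,\mathrm{id}_D)\to0$ as $n\to\infty$.
   Context: $\mathrm{d}_{C^0}(f,g)=\max_{p}\|f(p)-g(p)\|+\max_p\|f^{-1}(p)-g^{-1}(p)\|$; $\mathrm{d}'_W(f,g)=\sup_{p\ne q}\frac{|\|f(p)-f(q)\|-\|g(p)-g(q)\||}{\|p-q\|}$; $\mathrm{d}_W(f,g)=\mathrm{d}_{C^0}(f,g)+\mathrm{d}'_W(f,g)+\mathrm{d}'_W(f^{-1},g^{-1})$. *)

From Stdlib Require Import Reals Lra ClassicalEpsilon.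
Open Scope R_scope.

Definition pt := (R * R)%type.

Definition padd (p q : pt) : pt := (fst p + fst q, snd p + snd q).
Definition psub (p q : pt) : pt := (fst p - fst q, snd p - snd q).
Definition pnorm (p : pt) : R := sqrt (fst p ^ 2 + snd p ^ 2).
Definition dist (p q : pt) : R := pnorm (psub p q).

Definition inD (p : pt) : Prop := fst p ^ 2 + snd p ^ 2 <= 1.

(* 2x2 real matrices, stored as rows ((a,b),(c,d)) *)
Definition mat2 := (pt * pt)%type.
Definition mapply (A : mat2) (v : pt) : pt :=
  (fst (fst A) * fst v + snd (fst A) * snd v,
   fst (snd A) * fst v + snd (snd A) * snd v).
Definition msub (A B : mat2) : mat2 := (psub (fst A) (fst B), psub (snd A) (snd B)).
Definition mnorm (A : mat2) : R :=
  sqrt (fst (fst A) ^ 2 + snd (fst A) ^ 2 + fst (snd A) ^ 2 + snd (snd A) ^ 2).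
Definition mid : mat2 := ((1, 0), (0, 1)).

(* df p is the derivative (Jacobian) of f at p, relative to D (one-sided at
   the boundary); since D is convex with nonempty interior, it is unique. *)
Definition has_deriv_on_D (f : pt -> pt) (df : pt -> mat2) : Prop :=
  forall p, inD p -> forall eps, 0 < eps -> exists delta, 0 < delta /\
    forall q, inD q -> dist q p < delta ->
      pnorm (psub (psub (f q) (f p)) (mapply (df p) (psub q p))) <= eps * dist q p.

Definition cont_on_D (df : pt -> mat2) : Prop :=
  forall p, inD p -> forall eps, 0 < eps -> exists delta, 0 < delta /\
    forall q, inD q -> dist q p < delta -> mnorm (msub (df q) (df p)) < eps.

Definition C1_on_D (f : pt -> pt) (df : pt -> mat2) : Prop :=
  has_deriv_on_D f df /\ cont_on_D df.

Definition C1_diffeo_D (f g : pt -> pt) (df dg : pt -> mat2) : Prop :=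
  (forall p, inD p -> inD (f p)) /\ (forall p, inD p -> inD (g p)) /\
  (forall p, inD p -> g (f p) = p) /\ (forall p, inD p -> f (g p) = p) /\
  C1_on_D f df /\ C1_on_D g dg.

(* supremum of a set of reals (0 if empty or unbounded above; never used in
   those cases for C^1 maps of the compact disk) *)
Definition Rsup (E : R -> Prop) : R :=
  match excluded_middle_informative (bound E /\ exists x, E x) with
  | left H => proj1_sig (completeness E (proj1 H) (proj2 H))
  | right _ => 0
  end.

Definition dC0 (f finv g ginv : pt -> pt) : R :=
  Rsup (fun r => exists p, inD p /\ r = dist (f p) (g p)) +
  Rsup (fun r => exists p, inD p /\ r = dist (finv p) (ginv p)).

Definition dW' (f g : pt -> pt) : R :=
  Rsup (fun r => exists p q, inD p /\ inD q /\ p <> q /\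
          r = Rabs (dist (f p) (f q) - dist (g p) (g q)) / dist p q).

Definition dW (f finv g ginv : pt -> pt) : R :=
  dC0 f finv g ginv + dW' f g + dW' finv ginv.

Definition idD : pt -> pt := fun p => p.
Definition did : pt -> mat2 := fun _ => mid.

Definition C1_conv_to_id (f : nat -> pt -> pt) (df : nat -> pt -> mat2) : Prop :=
  forall eps, 0 < eps -> exists N, forall n, (n >= N)%nat ->
    forall p, inD p -> dist (f n p) p <= eps /\ mnorm (msub (df n p) mid) <= eps.

(* The maps [f_n] are twists of the disk: the circle of radius [r] is rotated through the
   angle [k_n ln (r^2 + c_n)], with [k_n = - pi / (n + 1)] and [c_n = exp (- (n + 1))]; the
   inverse is the opposite twist.  At the origin the angle is exactly [pi], so [D f_n (0) = - I]
   for every [n] and [f_n] stays away from the identity in the C^1 topology.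
   A twist through an angle [theta (r)] moves a point of radius [r] by at most [r |theta (r)|],
   and changes the distance of two points of radii [r <= r'] by at most the chord through which
   the inner one is turned relative to the outer one, [r |theta (r') - theta (r)|].  For the
   logarithmic angle both are [O (|k|)] uniformly on the disk, since [r ln r] is bounded and
   [r ln (r' / r) <= r' - r]; hence [d_W (f_n, id) <= 8 |k_n| -> 0]. *)

From Stdlib Require Import Reals Lra Psatz ClassicalEpsilon.
From Coquelicot Require Import Coquelicot.
Open Scope R_scope.

(** * Differential calculus in two variables *)

Lemma differentiable_pt_lim_of_exact (f : R -> R -> R) x y a b :
  (forall u v, f u v - f x y = a * (u - x) + b * (v - y)) ->
  differentiable_pt_lim f x y a b.
Proof.
  intros Hf eps; exists eps; intros u v _ _.
  rewrite Hf, Rminus_diag, Rabs_R0.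
  apply Rmult_le_pos; [apply Rlt_le, cond_pos |].
  apply Rle_trans with (Rabs (u - x)); [apply Rabs_pos | apply Rmax_l].
Qed.

Lemma differentiable_pt_lim_const c x y : differentiable_pt_lim (fun _ _ => c) x y 0 0.
Proof. apply differentiable_pt_lim_of_exact; intros; ring. Qed.

Lemma differentiable_pt_lim_id1 x y : differentiable_pt_lim (fun u _ => u) x y 1 0.
Proof. apply differentiable_pt_lim_of_exact; intros; ring. Qed.

Lemma differentiable_pt_lim_id2 x y : differentiable_pt_lim (fun _ v => v) x y 0 1.
Proof. apply differentiable_pt_lim_of_exact; intros; ring. Qed.

Lemma differentiable_pt_lim_linear a b x y :
  differentiable_pt_lim (fun u v => a * u + b * v) x y a b.
Proof. apply differentiable_pt_lim_of_exact; intros; ring. Qed.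

Lemma differentiable_pt_lim_Rmult x y : differentiable_pt_lim Rmult x y y x.
Proof.
  intros eps; exists eps; intros u v Hu Hv.
  replace (u * v - x * y - (y * (u - x) + x * (v - y))) with ((u - x) * (v - y)) by ring.
  rewrite Rabs_mult.
  destruct (Rle_dec (Rabs (u - x)) (Rabs (v - y))).
  - rewrite Rmax_right by lra; apply Rmult_le_compat_r; [apply Rabs_pos | lra].
  - rewrite Rmax_left by lra; rewrite (Rmult_comm eps).
    apply Rmult_le_compat_l; [apply Rabs_pos | lra].
Qed.

Lemma differentiable_pt_lim_eq_deriv f x y a b a' b' :
  differentiable_pt_lim f x y a b -> a = a' -> b = b' -> differentiable_pt_lim f x y a' b'.
Proof. now intros H -> ->. Qed.

Lemma differentiable_pt_lim_ext_all (f g : R -> R -> R) x y a b :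
  (forall u v, f u v = g u v) -> differentiable_pt_lim g x y a b -> differentiable_pt_lim f x y a b.
Proof.
  intros E; apply differentiable_pt_lim_ext.
  exists (mkposreal 1 Rlt_0_1); intros; symmetry; apply E.
Qed.

Lemma differentiable_pt_lim_mult f g x y a b c d :
  differentiable_pt_lim f x y a b -> differentiable_pt_lim g x y c d ->
  differentiable_pt_lim (fun u v => f u v * g u v) x y
    (g x y * a + f x y * c) (g x y * b + f x y * d).
Proof. intros; apply (differentiable_pt_lim_comp Rmult); auto; apply differentiable_pt_lim_Rmult. Qed.

Lemma differentiable_pt_lim_lincomb (p q : R) f g x y a b c d :
  differentiable_pt_lim f x y a b -> differentiable_pt_lim g x y c d ->
  differentiable_pt_lim (fun u v => p * f u v + q * g u v) x y (p * a + q * c) (p * b + q * d).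
Proof.
  intros; apply (differentiable_pt_lim_comp (fun s t => p * s + q * t)); auto.
  apply differentiable_pt_lim_linear.
Qed.

Lemma differentiable_pt_lim_plus f g x y a b c d :
  differentiable_pt_lim f x y a b -> differentiable_pt_lim g x y c d ->
  differentiable_pt_lim (fun u v => f u v + g u v) x y (a + c) (b + d).
Proof.
  intros Hf Hg; apply (differentiable_pt_lim_ext_all _ (fun u v => 1 * f u v + 1 * g u v)).
  - intros; ring.
  - eapply differentiable_pt_lim_eq_deriv; [apply differentiable_pt_lim_lincomb; eauto | ring | ring].
Qed.

Lemma differentiable_pt_lim_minus f g x y a b c d :
  differentiable_pt_lim f x y a b -> differentiable_pt_lim g x y c d ->
  differentiable_pt_lim (fun u v => f u v - g u v) x y (a - c) (b - d).
Proof.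
  intros Hf Hg; apply (differentiable_pt_lim_ext_all _ (fun u v => 1 * f u v + -1 * g u v)).
  - intros; ring.
  - eapply differentiable_pt_lim_eq_deriv; [apply differentiable_pt_lim_lincomb; eauto | ring | ring].
Qed.

Lemma differentiable_pt_lim_comp_1d h g x y l a b :
  derivable_pt_lim h (g x y) l -> differentiable_pt_lim g x y a b ->
  differentiable_pt_lim (fun u v => h (g u v)) x y (l * a) (l * b).
Proof.
  intros Hh Hg; eapply differentiable_pt_lim_eq_deriv.
  - apply (differentiable_pt_lim_comp (fun s _ => h s) g g); [| exact Hg | exact Hg].
    apply differentiable_pt_lim_proj1_0, Hh.
  - ring.
  - ring.
Qed.

(* [minus] is tried before [plus] because [x - y] unfolds to [x + - y], and composition
   comes last because it matches any application. *)
Ltac differentiate_2d :=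
  repeat first
    [ apply differentiable_pt_lim_minus | apply differentiable_pt_lim_plus
    | apply differentiable_pt_lim_mult | apply differentiable_pt_lim_id1
    | apply differentiable_pt_lim_id2 | apply differentiable_pt_lim_const
    | apply differentiable_pt_lim_comp_1d ].

Ltac continuity_2d :=
  repeat first
    [ apply continuity_2d_pt_minus | apply continuity_2d_pt_plus
    | apply continuity_2d_pt_opp | apply continuity_2d_pt_mult
    | apply continuity_2d_pt_id1 | apply continuity_2d_pt_id2
    | apply continuity_2d_pt_const | apply continuity_1d_2d_pt_comp ].

(** * Plane geometry *)

Definition sqn (p : pt) : R := fst p * fst p + snd p * snd p.

Lemma sqn_ge0 p : 0 <= sqn p.
Proof. unfold sqn; nra. Qed.

Lemma pnorm_sqn p : pnorm p = sqrt (sqn p).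
Proof. unfold pnorm, sqn; f_equal; ring. Qed.

Lemma pnorm_ge0 p : 0 <= pnorm p.
Proof. apply sqrt_pos. Qed.

Lemma pnorm_sqr p : pnorm p * pnorm p = sqn p.
Proof. rewrite pnorm_sqn; apply sqrt_sqrt, sqn_ge0. Qed.

Lemma inD_sqn p : inD p <-> sqn p <= 1.
Proof. unfold inD, sqn; simpl; now rewrite !Rmult_1_r. Qed.

Lemma sqrt_le_of_le_sqr x y : 0 <= y -> x <= y * y -> sqrt x <= y.
Proof. intros Hy H; rewrite <- (sqrt_square y Hy); now apply sqrt_le_1_alt. Qed.

Lemma pnorm_le_sum_abs a b : pnorm (a, b) <= Rabs a + Rabs b.
Proof.
  pose proof (Rabs_pos a); pose proof (Rabs_pos b).
  apply sqrt_le_of_le_sqr; [lra |]; cbn [fst snd].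
  rewrite <- (pow2_abs a), <- (pow2_abs b); nra.
Qed.

Lemma Rabs_fst_le p : Rabs (fst p) <= pnorm p.
Proof. rewrite <- sqrt_Rsqr_abs; apply sqrt_le_1_alt; unfold Rsqr; nra. Qed.

Lemma Rabs_snd_le p : Rabs (snd p) <= pnorm p.
Proof. rewrite <- sqrt_Rsqr_abs; apply sqrt_le_1_alt; unfold Rsqr; nra. Qed.

Lemma mnorm_le_sum_abs a b c d :
  mnorm ((a, b), (c, d)) <= Rabs a + Rabs b + Rabs c + Rabs d.
Proof.
  pose proof (Rabs_pos a); pose proof (Rabs_pos b);
  pose proof (Rabs_pos c); pose proof (Rabs_pos d).
  apply sqrt_le_of_le_sqr; [lra |]; cbn [fst snd].
  rewrite <- (pow2_abs a), <- (pow2_abs b), <- (pow2_abs c), <- (pow2_abs d); nra.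
Qed.

Lemma dist_sqn p q : dist p q = sqrt (sqn (psub p q)).
Proof. apply pnorm_sqn. Qed.

Lemma dist_ge0 p q : 0 <= dist p q.
Proof. apply pnorm_ge0. Qed.

Lemma dist_sym p q : dist p q = dist q p.
Proof. rewrite !dist_sqn; unfold sqn, psub; cbn; f_equal; ring. Qed.

Lemma dist_pos p q : p <> q -> 0 < dist p q.
Proof.
  intros Hpq; rewrite dist_sqn; apply sqrt_lt_R0; unfold sqn, psub; cbn.
  destruct p as [x y], q as [x' y']; cbn.
  destruct (Req_dec x x'), (Req_dec y y'); [congruence | nra | nra | nra].
Qed.

Lemma dot_le_pnorm u v : fst u * fst v + snd u * snd v <= pnorm u * pnorm v.
Proof.
  rewrite !pnorm_sqn, <- sqrt_mult by apply sqn_ge0.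
  destruct (Rle_dec (fst u * fst v + snd u * snd v) 0).
  - pose proof (sqrt_pos (sqn u * sqn v)); lra.
  - rewrite <- (sqrt_square (fst u * fst v + snd u * snd v)) by lra.
    apply sqrt_le_1_alt; unfold sqn.
    pose proof (pow2_ge_0 (fst u * snd v - snd u * fst v)); nra.
Qed.

Lemma dist_triangle p q r : dist p r <= dist p q + dist q r.
Proof.
  unfold dist; set (u := psub p q); set (v := psub q r).
  replace (psub p r) with (fst u + fst v, snd u + snd v) by (unfold u, v, psub; cbn; f_equal; ring).
  pose proof (dot_le_pnorm u v); pose proof (pnorm_sqr u); pose proof (pnorm_sqr v).
  pose proof (pnorm_ge0 u); pose proof (pnorm_ge0 v).
  rewrite pnorm_sqn; apply sqrt_le_of_le_sqr; [lra |]; unfold sqn in *; cbn [fst snd]; nra.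
Qed.

Lemma dist_rev_triangle p q r : Rabs (dist p r - dist q r) <= dist p q.
Proof.
  pose proof (dist_triangle p q r); pose proof (dist_triangle q p r).
  rewrite (dist_sym q p) in *; apply Rabs_le; lra.
Qed.

Lemma Rabs_pnorm_sub_le p q : Rabs (pnorm p - pnorm q) <= dist p q.
Proof.
  replace (pnorm p) with (dist p (0, 0)) by (unfold dist, psub; cbn; f_equal; destruct p; f_equal; cbn; ring).
  replace (pnorm q) with (dist q (0, 0)) by (unfold dist, psub; cbn; f_equal; destruct q; f_equal; cbn; ring).
  apply dist_rev_triangle.
Qed.

(** * Rotations and twists *)

Definition rot (a : R) (p : pt) : pt :=
  (fst p * cos a - snd p * sin a, fst p * sin a + snd p * cos a).

Lemma sin_sqr_add_cos_sqr a : sin a * sin a + cos a * cos a = 1.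
Proof. exact (sin2_cos2 a). Qed.

Lemma sqn_rot a p : sqn (rot a p) = sqn p.
Proof.
  transitivity (sqn p * (sin a * sin a + cos a * cos a)); [unfold sqn, rot; cbn; ring |].
  rewrite sin_sqr_add_cos_sqr; ring.
Qed.

Lemma rot_0 p : rot 0 p = p.
Proof. unfold rot; rewrite cos_0, sin_0; destruct p; cbn; f_equal; ring. Qed.

Lemma rot_opp a p : rot (- a) (rot a p) = p.
Proof.
  unfold rot; rewrite cos_neg, sin_neg; destruct p as [x y]; cbn [fst snd].
  pose proof (sin_sqr_add_cos_sqr a) as E.
  f_equal.
  - transitivity (x * (sin a * sin a + cos a * cos a)); [ring | rewrite E; ring].
  - transitivity (y * (sin a * sin a + cos a * cos a)); [ring | rewrite E; ring].
Qed.

Lemma dist_rot a p q : dist (rot a p) (rot a q) = dist p q.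
Proof.
  rewrite !dist_sqn, <- (sqn_rot a (psub p q)).
  f_equal; unfold sqn, rot, psub; cbn; ring.
Qed.

Lemma Rabs_sin_le t : Rabs (sin t) <= Rabs t.
Proof.
  assert (Hpos : forall s, 0 <= s -> Rabs (sin s) <= s).
  { intros s Hs; destruct (Rle_dec s 1).
    - destruct (Req_dec s 0) as [-> |]; [rewrite sin_0, Rabs_R0; lra |].
      pose proof PI2_1; pose proof (sin_lt_x s ltac:(lra)).
      rewrite Rabs_right; [lra | apply Rle_ge, sin_ge_0; lra].
    - pose proof (SIN_bound s); apply Rabs_le; lra. }
  destruct (Rle_dec 0 t).
  - rewrite (Rabs_right t) by lra; auto.
  - rewrite <- Rabs_Ropp, <- sin_neg, (Rabs_left t) by lra; apply Hpos; lra.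
Qed.

(* The chord between the two rotated copies of [p] has length [2 |sin ((a - b) / 2)| |p|]. *)
Lemma dist_rot_angles a b p : dist (rot a p) (rot b p) <= Rabs (a - b) * pnorm p.
Proof.
  set (h := (a - b) / 2).
  assert (Hc : cos (a - b) = 1 - 2 * sin h * sin h)
    by (rewrite <- cos_2a_sin; f_equal; unfold h; field).
  assert (E : sqn (psub (rot a p) (rot b p)) = sqn p * Rsqr (2 * sin h)).
  { transitivity (sqn p * ((sin a * sin a + cos a * cos a) + (sin b * sin b + cos b * cos b)
                           - 2 * (cos a * cos b + sin a * sin b)));
      [unfold sqn, rot, psub; cbn; ring |].
    rewrite !sin_sqr_add_cos_sqr, <- cos_minus, Hc; unfold Rsqr; ring. }
  rewrite dist_sqn, E, sqrt_mult_alt, sqrt_Rsqr_abs, <- pnorm_sqn, (Rmult_comm (Rabs _))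
    by apply sqn_ge0.
  apply Rmult_le_compat_l; [apply pnorm_ge0 |].
  replace (a - b) with (2 * h) by (unfold h; field).
  rewrite !Rabs_mult, Rabs_right by lra.
  pose proof (Rabs_sin_le h); lra.
Qed.

Definition twist (phi : R -> R) (p : pt) : pt := rot (phi (sqn p)) p.

Lemma sqn_twist phi p : sqn (twist phi p) = sqn p.
Proof. apply sqn_rot. Qed.

Lemma twist_inD phi p : inD p -> inD (twist phi p).
Proof. now rewrite !inD_sqn, sqn_twist. Qed.

Lemma twist_opp phi psi p : (forall s, psi s = - phi s) -> twist psi (twist phi p) = p.
Proof. intros Hpsi; unfold twist at 1; rewrite sqn_twist, Hpsi; apply rot_opp. Qed.

Definition shear_bound (phi : R -> R) (L : R) : Prop :=
  forall s r, 0 <= s <= r -> s * Rabs (phi (r * r) - phi (s * s)) <= L * (r - s).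

Definition turn_bound (phi : R -> R) (M : R) : Prop :=
  forall s, 0 <= s <= 1 -> s * Rabs (phi (s * s)) <= M.

Lemma shear_bound_ge0 phi L : shear_bound phi L -> 0 <= L.
Proof. intros HL; specialize (HL 0 1 ltac:(lra)); lra. Qed.

Lemma turn_bound_ge0 phi M : turn_bound phi M -> 0 <= M.
Proof. intros HM; specialize (HM 0 ltac:(lra)); lra. Qed.

(* Compare both images with the rotation of [p] and [q] by the angle of the outer point:
   the error is the chord through which the inner point has been turned. *)
Lemma twist_dist_distortion phi L p q :
  shear_bound phi L -> Rabs (dist (twist phi p) (twist phi q) - dist p q) <= L * dist p q.
Proof.
  intros HL; pose proof (shear_bound_ge0 _ _ HL).
  assert (Hinner : forall p q, pnorm p <= pnorm q ->
            Rabs (dist (twist phi p) (twist phi q) - dist p q) <= L * dist p q).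
  { clear p q; intros p q Hpq; unfold twist.
    rewrite <- (pnorm_sqr p), <- (pnorm_sqr q).
    set (a := phi (pnorm p * pnorm p)); set (b := phi (pnorm q * pnorm q)).
    rewrite <- (dist_rot b p q) at 1.
    eapply Rle_trans; [apply dist_rev_triangle |].
    eapply Rle_trans; [apply dist_rot_angles |].
    pose proof (HL (pnorm p) (pnorm q) (conj (pnorm_ge0 p) Hpq)) as Hab; fold a b in Hab.
    pose proof (Rabs_pnorm_sub_le q p) as Hqp; rewrite Rabs_right, dist_sym in Hqp by lra.
    rewrite Rabs_minus_sym, Rmult_comm.
    eapply Rle_trans; [exact Hab |]; apply Rmult_le_compat_l; lra. }
  destruct (Rle_dec (pnorm p) (pnorm q)); [auto |].
  rewrite (dist_sym (twist phi p)), (dist_sym p); apply Hinner; lra.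
Qed.

Lemma twist_displacement phi M p : turn_bound phi M -> inD p -> dist (twist phi p) p <= M.
Proof.
  intros HM Hp; unfold twist.
  replace (dist (rot (phi (sqn p)) p) p) with (dist (rot (phi (sqn p)) p) (rot 0 p))
    by now rewrite rot_0.
  eapply Rle_trans; [apply dist_rot_angles |].
  rewrite Rminus_0_r, <- pnorm_sqr, Rmult_comm; apply HM.
  rewrite inD_sqn, <- pnorm_sqr in Hp; pose proof (pnorm_ge0 p); split; nra.
Qed.

Lemma Rsup_bounds (E : R -> Prop) B :
  0 <= B -> (forall r, E r -> 0 <= r <= B) -> 0 <= Rsup E <= B.
Proof.
  intros HB HE; unfold Rsup.
  destruct (excluded_middle_informative _) as [[Hb [x Hx]] |]; [| lra].
  destruct (completeness E _ _) as [s [Hub Hlub]]; cbn; split.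
  - specialize (HE x Hx); specialize (Hub x Hx); lra.
  - apply Hlub; intros r Hr; apply HE, Hr.
Qed.

Lemma dW'_twist_le phi L : shear_bound phi L -> 0 <= dW' (twist phi) idD <= L.
Proof.
  intros HL; apply Rsup_bounds; [eapply shear_bound_ge0, HL |].
  intros r [p [q [_ [_ [Hpq ->]]]]]; unfold idD.
  pose proof (dist_pos p q Hpq); pose proof (twist_dist_distortion phi L p q HL).
  split; [apply Rmult_le_pos; [apply Rabs_pos | apply Rlt_le, Rinv_0_lt_compat; auto] |].
  apply Rmult_le_reg_r with (dist p q); auto.
  unfold Rdiv; rewrite Rmult_assoc, Rinv_l by lra; lra.
Qed.

Lemma dC0_twist_le phi psi M :
  turn_bound phi M -> turn_bound psi M -> 0 <= dC0 (twist phi) (twist psi) idD idD <= 2 * M.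
Proof.
  intros Hphi Hpsi; pose proof (turn_bound_ge0 _ _ Hphi).
  assert (Hsup : forall chi, turn_bound chi M ->
            0 <= Rsup (fun r => exists p, inD p /\ r = dist (twist chi p) (idD p)) <= M).
  { intros chi Hchi; apply Rsup_bounds; auto.
    intros r [p [Hp ->]]; split; [apply dist_ge0 | now apply twist_displacement]. }
  unfold dC0; pose proof (Hsup phi Hphi); pose proof (Hsup psi Hpsi); lra.
Qed.

Lemma dW_twist_le phi psi L M :
  shear_bound phi L -> shear_bound psi L -> turn_bound phi M -> turn_bound psi M ->
  0 <= dW (twist phi) (twist psi) idD idD <= 2 * M + 2 * L.
Proof.
  intros; unfold dW.
  pose proof (dC0_twist_le phi psi M); pose proof (dW'_twist_le phi L);
  pose proof (dW'_twist_le psi L); intuition lra.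
Qed.

(** * Smoothness of twists *)

Lemma deriv_at_of_partials (f : pt -> pt) (A : mat2) x y :
  differentiable_pt_lim (fun u v => fst (f (u, v))) x y (fst (fst A)) (snd (fst A)) ->
  differentiable_pt_lim (fun u v => snd (f (u, v))) x y (fst (snd A)) (snd (snd A)) ->
  forall eps, 0 < eps -> exists delta, 0 < delta /\ forall q, dist q (x, y) < delta ->
    pnorm (psub (psub (f q) (f (x, y))) (mapply A (psub q (x, y)))) <= eps * dist q (x, y).
Proof.
  intros H1 H2 eps Heps.
  destruct (H1 (mkposreal (eps / 2) ltac:(lra))) as [d1 Hd1].
  destruct (H2 (mkposreal (eps / 2) ltac:(lra))) as [d2 Hd2].
  exists (Rmin d1 d2); split; [apply Rmin_pos; apply cond_pos |].
  intros [u v] Hq.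
  pose proof (Rabs_fst_le (psub (u, v) (x, y))) as Hu.
  pose proof (Rabs_snd_le (psub (u, v) (x, y))) as Hv.
  cbn in Hu, Hv; fold (dist (u, v) (x, y)) in Hu, Hv.
  pose proof (Rmin_l d1 d2); pose proof (Rmin_r d1 d2).
  specialize (Hd1 u v ltac:(lra) ltac:(lra)); specialize (Hd2 u v ltac:(lra) ltac:(lra)).
  assert (Hmax : Rmax (Rabs (u - x)) (Rabs (v - y)) <= dist (u, v) (x, y))
    by now apply Rmax_lub.
  cbn in Hd1, Hd2.
  eapply Rle_trans; [apply pnorm_le_sum_abs |].
  pose proof (Rmult_le_compat_l (eps / 2) _ _ ltac:(lra) Hmax).
  unfold psub, mapply; cbn [fst snd]; lra.
Qed.

Lemma cont_at_of_entries (A : pt -> mat2) x y :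
  continuity_2d_pt (fun u v => fst (fst (A (u, v)))) x y ->
  continuity_2d_pt (fun u v => snd (fst (A (u, v)))) x y ->
  continuity_2d_pt (fun u v => fst (snd (A (u, v)))) x y ->
  continuity_2d_pt (fun u v => snd (snd (A (u, v)))) x y ->
  forall eps, 0 < eps -> exists delta, 0 < delta /\ forall q, dist q (x, y) < delta ->
    mnorm (msub (A q) (A (x, y))) < eps.
Proof.
  intros H1 H2 H3 H4 eps Heps.
  set (e := mkposreal (eps / 4) ltac:(lra)).
  destruct (H1 e) as [d1 Hd1], (H2 e) as [d2 Hd2], (H3 e) as [d3 Hd3], (H4 e) as [d4 Hd4].
  exists (Rmin (Rmin d1 d2) (Rmin d3 d4)); split; [repeat apply Rmin_pos; apply cond_pos |].
  intros [u v] Hq.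
  pose proof (Rabs_fst_le (psub (u, v) (x, y))) as Hu.
  pose proof (Rabs_snd_le (psub (u, v) (x, y))) as Hv.
  cbn in Hu, Hv; fold (dist (u, v) (x, y)) in Hu, Hv.
  pose proof (Rmin_l (Rmin d1 d2) (Rmin d3 d4)); pose proof (Rmin_r (Rmin d1 d2) (Rmin d3 d4)).
  pose proof (Rmin_l d1 d2); pose proof (Rmin_r d1 d2);
  pose proof (Rmin_l d3 d4); pose proof (Rmin_r d3 d4).
  specialize (Hd1 u v ltac:(lra) ltac:(lra)); specialize (Hd2 u v ltac:(lra) ltac:(lra));
  specialize (Hd3 u v ltac:(lra) ltac:(lra)); specialize (Hd4 u v ltac:(lra) ltac:(lra)).
  unfold msub, psub; eapply Rle_lt_trans; [apply mnorm_le_sum_abs |]; cbn in *; lra.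
Qed.

(* Differentiating [rot (phi |p|^2) p]: the rotation matrix itself, plus the gradient
   [2 phi' (|p|^2) p] of the angle times the quarter turn [(-y', x')] of the image [(x', y')]. *)
Definition dtwist (phi phi' : R -> R) (p : pt) : mat2 :=
  let a := phi (sqn p) in
  let g := 2 * phi' (sqn p) in
  let q := twist phi p in
  ((cos a - snd q * g * fst p, - sin a - snd q * g * snd p),
   (sin a + fst q * g * fst p, cos a + fst q * g * snd p)).

Section TwistSmoothness.

Variables phi phi' : R -> R.
Hypothesis phi_deriv : forall s, 0 <= s -> derivable_pt_lim phi s (phi' s).
Hypothesis phi'_cont : forall s, 0 <= s -> continuity_pt phi' s.

Lemma twist_partials x y :
  differentiable_pt_lim (fun u v => fst (twist phi (u, v))) x y
    (fst (fst (dtwist phi phi' (x, y)))) (snd (fst (dtwist phi phi' (x, y)))) /\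
  differentiable_pt_lim (fun u v => snd (twist phi (u, v))) x y
    (fst (snd (dtwist phi phi' (x, y)))) (snd (snd (dtwist phi phi' (x, y)))).
Proof.
  assert (0 <= x * x + y * y) by nra.
  unfold dtwist, twist, rot, sqn; cbn [fst snd].
  split; eapply differentiable_pt_lim_eq_deriv; try differentiate_2d;
    try (apply derivable_pt_lim_cos || apply derivable_pt_lim_sin || now apply phi_deriv);
    cbv beta; ring.
Qed.

Lemma twist_has_deriv : has_deriv_on_D (twist phi) (dtwist phi phi').
Proof.
  intros [x y] _ eps Heps; destruct (twist_partials x y) as [H1 H2].
  destruct (deriv_at_of_partials _ _ x y H1 H2 eps Heps) as [delta [Hdelta H]].
  exists delta; split; auto.
Qed.

Lemma dtwist_cont : cont_on_D (dtwist phi phi').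
Proof.
  intros [x y] _ eps Heps.
  assert (Hs : 0 <= x * x + y * y) by nra.
  assert (Hphi : continuity_pt phi (x * x + y * y))
    by (apply derivable_continuous_pt; exists (phi' (x * x + y * y)); exact (phi_deriv _ Hs)).
  enough (exists delta, 0 < delta /\ forall q, dist q (x, y) < delta ->
            mnorm (msub (dtwist phi phi' q) (dtwist phi phi' (x, y))) < eps)
    as [delta [Hdelta H]] by (exists delta; auto).
  apply cont_at_of_entries; auto; unfold dtwist, twist, rot, sqn; cbn [fst snd];
    continuity_2d; auto using continuity_cos, continuity_sin.
Qed.

End TwistSmoothness.

Lemma twist_C1_diffeo phi phi' psi psi' :
  (forall s, psi s = - phi s) ->
  (forall s, 0 <= s -> derivable_pt_lim phi s (phi' s)) -> (forall s, 0 <= s -> continuity_pt phi' s) ->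
  (forall s, 0 <= s -> derivable_pt_lim psi s (psi' s)) -> (forall s, 0 <= s -> continuity_pt psi' s) ->
  C1_diffeo_D (twist phi) (twist psi) (dtwist phi phi') (dtwist psi psi').
Proof.
  intros Hpsi; repeat split; auto using twist_inD, twist_has_deriv, dtwist_cont.
  - intros p _; now apply twist_opp.
  - intros p _; apply twist_opp; intros s; rewrite Hpsi; ring.
Qed.

(** * Logarithmic twists *)

Definition log_angle (k c s : R) : R := k * ln (s + c).
Definition log_angle' (k c s : R) : R := k / (s + c).

Lemma log_angle_deriv k c s : 0 < c -> 0 <= s -> derivable_pt_lim (log_angle k c) s (log_angle' k c s).
Proof. intros; apply is_derive_Reals; unfold log_angle, log_angle'; auto_derive; [lra | field; lra]. Qed.

Lemma log_angle'_cont k c s : 0 < c -> 0 <= s -> continuity_pt (log_angle' k c) s.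
Proof.
  intros; apply derivable_continuous_pt; exists (- k / (s + c) ^ 2).
  apply is_derive_Reals; unfold log_angle'; auto_derive; [lra | field; lra].
Qed.

Lemma ln_le_ln x y : 0 < x -> x <= y -> ln x <= ln y.
Proof.
  intros Hx Hxy; destruct (Req_dec x y) as [-> | ]; [lra |].
  left; apply ln_increasing; lra.
Qed.

Lemma ln_le_sub_1 x : 0 < x -> ln x <= x - 1.
Proof. intros Hx; pose proof (exp_ineq1_le (ln x)); rewrite exp_ln in *; lra. Qed.

(* Through [ln ((r^2 + c) / (s^2 + c)) <= ln ((r / s)^2) = 2 ln (r / s) <= 2 (r / s - 1)]. *)
Lemma ln_shift_sqr_diff s r c : 0 <= s <= r -> 0 < c ->
  0 <= ln (r * r + c) - ln (s * s + c) /\ s * (ln (r * r + c) - ln (s * s + c)) <= 2 * (r - s).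
Proof.
  intros Hsr Hc.
  assert (Hmono : ln (s * s + c) <= ln (r * r + c)) by (apply ln_le_ln; nra).
  split; [lra |].
  destruct (Req_dec s 0) as [-> | Hs0]; [lra |].
  assert (Hs : 0 < s) by lra.
  assert (Hsq : s * s <= r * r) by nra.
  assert (Hcross : ln (r * r + c) + ln (s * s) <= ln (s * s + c) + ln (r * r)).
  { rewrite <- !ln_mult by nra; apply ln_le_ln; [apply Rmult_lt_0_compat; nra |].
    assert (c * (s * s) <= c * (r * r)) by (apply Rmult_le_compat_l; lra); nra. }
  assert (Hratio : ln (r * r) - ln (s * s) = 2 * ln (r / s)).
  { unfold Rdiv; rewrite !ln_mult, ln_Rinv by (try apply Rinv_0_lt_compat; nra); ring. }
  pose proof (ln_le_sub_1 (r / s) ltac:(apply Rdiv_lt_0_compat; lra)).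
  replace (2 * (r - s)) with (s * (2 * (r / s - 1))) by (field; lra).
  apply Rmult_le_compat_l; lra.
Qed.

Lemma log_angle_shear k c : 0 < c -> shear_bound (log_angle k c) (2 * Rabs k).
Proof.
  intros Hc s r Hsr; destruct (ln_shift_sqr_diff s r c Hsr Hc) as [Hpos Hle].
  unfold log_angle; rewrite <- Rmult_minus_distr_l, Rabs_mult, (Rabs_right (_ - _)) by lra.
  pose proof (Rabs_pos k); nra.
Qed.

Lemma log_angle_turn k c : 0 < c <= 1 -> turn_bound (log_angle k c) (2 * Rabs k).
Proof.
  intros Hc s Hs; unfold log_angle; rewrite Rabs_mult.
  enough (s * Rabs (ln (s * s + c)) <= 2) by (pose proof (Rabs_pos k); nra).
  destruct (Rle_dec 1 (s * s + c)).
  - pose proof (ln_le_sub_1 (s * s + c) ltac:(lra)).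
    assert (0 <= ln (s * s + c)) by (rewrite <- ln_1; apply ln_le_ln; lra).
    rewrite Rabs_right by lra; nra.
  - destruct (Req_dec s 0) as [-> | Hs0]; [lra |].
    assert (ln (s * s + c) < 0) by (rewrite <- ln_1; apply ln_increasing; nra).
    assert (ln (s * s) <= ln (s * s + c)) by (apply ln_le_ln; nra).
    pose proof (ln_le_sub_1 (/ s) ltac:(apply Rinv_0_lt_compat; lra)).
    rewrite ln_Rinv in * by lra; rewrite ln_mult in * by lra.
    rewrite Rabs_left by lra.
    apply Rle_trans with (s * (2 * (/ s - 1))); [apply Rmult_le_compat_l; lra |].
    replace (s * (2 * (/ s - 1))) with (2 - 2 * s) by (field; lra); lra.
Qed.

Lemma log_twist_C1_diffeo k c : 0 < c ->
  C1_diffeo_D (twist (log_angle k c)) (twist (log_angle (- k) c))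
    (dtwist (log_angle k c) (log_angle' k c)) (dtwist (log_angle (- k) c) (log_angle' (- k) c)).
Proof.
  intros Hc; apply twist_C1_diffeo; intros s; try intros Hs;
    auto using log_angle_deriv, log_angle'_cont.
  unfold log_angle; ring.
Qed.

Lemma dW_log_twist_le k c : 0 < c <= 1 ->
  0 <= dW (twist (log_angle k c)) (twist (log_angle (- k) c)) idD idD <= 8 * Rabs k.
Proof.
  intros Hc; assert (Hopp : Rabs (- k) = Rabs k) by apply Rabs_Ropp.
  pose proof (dW_twist_le (log_angle k c) (log_angle (- k) c) (2 * Rabs k) (2 * Rabs k)
    (log_angle_shear k c ltac:(lra)) ltac:(rewrite <- Hopp; apply log_angle_shear; lra)
    (log_angle_turn k c Hc) ltac:(rewrite <- Hopp; apply log_angle_turn, Hc)); lra.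
Qed.

Lemma dtwist_origin phi phi' :
  dtwist phi phi' (0, 0) = ((cos (phi 0), - sin (phi 0)), (sin (phi 0), cos (phi 0))).
Proof.
  unfold dtwist, twist, rot, sqn; cbn [fst snd].
  replace (0 * 0 + 0 * 0) with 0 by ring; f_equal; f_equal; ring.
Qed.

Lemma not_C1_conv_to_id_of_halfturn (f : nat -> pt -> pt) (df : nat -> pt -> mat2) :
  (forall n, df n (0, 0) = ((-1, 0), (0, -1))) -> ~ C1_conv_to_id f df.
Proof.
  intros Hdf Hconv; destruct (Hconv 1 Rlt_0_1) as [N HN].
  destruct (HN N (Nat.le_refl N) (0, 0)) as [_ Hfar]; [unfold inD; cbn; lra |].
  rewrite Hdf in Hfar; unfold mnorm, msub, psub, mid in Hfar; cbn [fst snd] in Hfar.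
  replace (_ + _ + _ + _) with 8 in Hfar by ring.
  rewrite <- sqrt_1 in Hfar; apply sqrt_le_0 in Hfar; lra.
Qed.

Lemma Un_cv_0_of_le_inv_succ (u : nat -> R) C :
  (forall n, 0 <= u n <= C * / (INR n + 1)) -> Un_cv u 0.
Proof.
  intros Hu; apply is_lim_seq_Reals.
  apply (is_lim_seq_le_le (fun _ => 0) u (fun n => C * / (INR n + 1))); [exact Hu | apply is_lim_seq_const |].
  replace (Finite 0) with (Rbar_mult C 0) by (cbn; f_equal; ring).
  apply is_lim_seq_scal_l.
  apply (is_lim_seq_ext (fun n => / INR (S n))); [intros n; now rewrite S_INR |].
  apply (is_lim_seq_incr_1 (fun n => / INR n)).
  replace (Finite 0) with (Rbar_inv p_infty) by reflexivity.
  apply is_lim_seq_inv; [apply is_lim_seq_INR | discriminate].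
Qed.

(* Chosen so that the angle at the origin is [twist_rate n * ln (twist_offset n) = pi]. *)
Definition twist_rate (n : nat) : R := - PI / (INR n + 1).
Definition twist_offset (n : nat) : R := exp (- (INR n + 1)).

Lemma twist_offset_bounds n : 0 < twist_offset n <= 1.
Proof.
  unfold twist_offset; split; [apply exp_pos |].
  pose proof (pos_INR n); pose proof (exp_increasing (- (INR n + 1)) 0 ltac:(lra)).
  rewrite exp_0 in *; lra.
Qed.

Lemma log_angle_twist_origin n : log_angle (twist_rate n) (twist_offset n) 0 = PI.
Proof.
  unfold log_angle, twist_rate, twist_offset; rewrite Rplus_0_l, ln_exp.
  pose proof (pos_INR n); field; lra.
Qed.

Lemma Rabs_twist_rate n : Rabs (twist_rate n) = PI * / (INR n + 1).
Proof.
  unfold twist_rate, Rdiv; pose proof (pos_INR n); pose proof PI_RGT_0.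
  rewrite Rabs_mult, Rabs_Ropp, !Rabs_right; [reflexivity | | lra].
  apply Rle_ge, Rlt_le, Rinv_0_lt_compat; lra.
Qed.

Theorem mainTheorem16 :
  exists (f finv : nat -> pt -> pt) (df dfinv : nat -> pt -> mat2),
    (forall n, C1_diffeo_D (f n) (finv n) (df n) (dfinv n)) /\
    ~ C1_conv_to_id f df /\
    Un_cv (fun n => dW (f n) (finv n) idD idD) 0.
Proof.
  exists (fun n => twist (log_angle (twist_rate n) (twist_offset n))),
    (fun n => twist (log_angle (- twist_rate n) (twist_offset n))),
    (fun n => dtwist (log_angle (twist_rate n) (twist_offset n)) (log_angle' (twist_rate n) (twist_offset n))),
    (fun n => dtwist (log_angle (- twist_rate n) (twist_offset n)) (log_angle' (- twist_rate n) (twist_offset n))).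
  split; [| split].
  - intros n; apply log_twist_C1_diffeo, twist_offset_bounds.
  - apply not_C1_conv_to_id_of_halfturn; intros n.
    rewrite dtwist_origin, log_angle_twist_origin, cos_PI, sin_PI, Ropp_0; reflexivity.
  - apply (Un_cv_0_of_le_inv_succ _ (8 * PI)); intros n.
    rewrite Rmult_assoc, <- Rabs_twist_rate; apply dW_log_twist_le, twist_offset_bounds.
Qed.
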